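(* Let $a>0$, $c>0$ and $b\ge 0$. Then the system $$\dot x=x(1-y+cx-axz),\qquad \dot y=y(-1+x),\qquad \dot z=z(-b+ax^2)$$ has no rational first integrals.
   Context: A rational first integral is a non-constant rational function $H\in\mathbb{C}(x,y,z)$ with $\mathcal{X}H=0$, where $\mathcal{X}=x(1-y+cx-axz)\partial_x+y(-1+x)\partial_y+z(-b+ax^2)\partial_z$. *)

From HB Require Import structures.
From mathcomp Require Import all_boot all_order all_algebra.
From mathcomp Require Import reals.
From mathcomp Require Import complex.
From mathcomp Require Import mpoly.
Set Implicit Arguments. Unset Strict Implicit. Unset Printing Implicit Defensive.
Import Order.TTheory GRing.Theory Num.Theory.
Local Open Scope ring_scope.
Local Open Scope complex_scope.

Definition Cx (R : realType) : Type := R[i].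

Definition vx (R : realType) : {mpoly (Cx R)[3]} := 'X_(@Ordinal 3 0 isT).
Definition vy (R : realType) : {mpoly (Cx R)[3]} := 'X_(@Ordinal 3 1 isT).
Definition vz (R : realType) : {mpoly (Cx R)[3]} := 'X_(@Ordinal 3 2 isT).

Definition cst (R : realType) (r : R) : {mpoly (Cx R)[3]} :=
  ((r%:C : Cx R))%:MP.

Definition Xfield (R : realType) (a b c : R) (p : {mpoly (Cx R)[3]})
  : {mpoly (Cx R)[3]} :=
  let x := vx R in let y := vy R in let z := vz R in
  x * (1 - y + cst c * x - cst a * x * z) * (p^`M(@Ordinal 3 0 isT))
  + y * (-1 + x) * (p^`M(@Ordinal 3 1 isT))
  + z * (- cst b + cst a * x ^+ 2) * (p^`M(@Ordinal 3 2 isT)).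

(* A rational function H = P/Q in C(x,y,z) (Q <> 0) is a first integral of X
   iff X(P/Q) = (Q X(P) - P X(Q)) / Q^2 = 0, i.e. Q X(P) = P X(Q). *)
Definition rational_first_integral (R : realType) (a b c : R)
  (P Q : {mpoly (Cx R)[3]}) : Prop :=
  Q != 0 /\ Q * Xfield a b c P = P * Xfield a b c Q.

(* P/Q is constant iff P = k Q for some constant k in C. *)
Definition rat_nonconstant (R : realType) (P Q : {mpoly (Cx R)[3]}) : Prop :=
  ~ exists k : Cx R, P = k%:MP * Q.

From HB Require Import structures.
From mathcomp Require Import all_boot all_order all_algebra.
From mathcomp Require Import reals complex mpoly.
From mathcomp Require Import ring zify.
Import Order.TTheory GRing.Theory Num.Theory.
Local Open Scope ring_scope.
Set Implicit Arguments. Unset Strict Implicit. Unset Printing Implicit Defensive.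

(* Write P/Q for a rational first integral of a polynomial vector field F, so that
   Q F(P) = P F(Q).  Let x_i = 0 be invariant, F(x_i) = x_i W, and split off the
   powers of x_i: P = x_i^p P1, Q = x_i^q Q1.  Then
   Q1 F(P1) - P1 F(Q1) = (q - p) W P1 Q1, and on the hyperplane x_i = 0 the left
   side has degree at most deg P1 + deg Q1 + deg F - 1 while the right side has
   degree deg P1 + deg Q1 + deg W; so if W dominates F there, p = q and the
   restrictions of P1, Q1 are a polynomial first integral of the restricted field.
   Inducting along the invariant hyperplanes z = 0, x = 0, y = 0 (cofactors
   -b + a x^2, 1 - y + c x and -1) these restrictions are proportional,
   P1 = mu Q1 on x_i = 0; then P - mu Q would be a solution divisible by a higher
   power of x_i than Q, which the same argument forbids unless P = mu Q. *)

Section Restriction.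
Context (n : nat) (K : idomainType).
Local Notation MP := {mpoly K[n]}.
Implicit Types (i j : 'I_n) (p q : MP) (m : 'X_{1..n}).

Definition msubst0 i : MP -> MP :=
  comp_mpoly [tuple if j == i then 0 else 'X_j | j < n].

HB.instance Definition _ i :=
  GRing.LRMorphism.copy (msubst0 i)
    (comp_mpoly [tuple if j == i then 0 else ('X_j : MP) | j < n]).

Lemma msubst0X i m : msubst0 i 'X_[m] = if m i == 0%N then 'X_[m] else 0.
Proof.
rewrite /msubst0 comp_mpolyX; case: eqP => mi0.
  rewrite [RHS]mpolyXE_id; apply: eq_bigr => j _; rewrite tnth_mktuple.
  by case: eqP => [->|//]; rewrite mi0 !expr0.
by rewrite (bigD1 i) //= tnth_mktuple eqxx expr0n (negbTE (introN eqP mi0)) mul0r.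
Qed.

Lemma msubst0XU i j : msubst0 i 'X_j = if j == i then 0 else 'X_j.
Proof. by rewrite msubst0X mnm1E; case: (j =P i). Qed.

Lemma msubst0C i c : msubst0 i c%:MP = c%:MP.
Proof. exact: comp_mpolyC. Qed.

Lemma msubst00 i : msubst0 i 0 = 0. Proof. exact: raddf0. Qed.
Lemma msubst01 i : msubst0 i 1 = 1. Proof. exact: rmorph1. Qed.
Lemma msubst0N i : {morph msubst0 i : p / - p}. Proof. exact: raddfN. Qed.
Lemma msubst0D i : {morph msubst0 i : p q / p + q}. Proof. exact: raddfD. Qed.
Lemma msubst0B i : {morph msubst0 i : p q / p - q}. Proof. exact: raddfB. Qed.
Lemma msubst0M i : {morph msubst0 i : p q / p * q}. Proof. exact: rmorphM. Qed.
Lemma msubst0Z i c p : msubst0 i (c *: p) = c *: msubst0 i p.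
Proof. exact: linearZ. Qed.
Lemma msubst0Xn i p k : msubst0 i (p ^+ k) = msubst0 i p ^+ k.
Proof. exact: rmorphXn. Qed.

Lemma mcoeff_msubst0 i p m :
  (msubst0 i p)@_m = if m i == 0%N then p@_m else 0.
Proof.
elim/mpolyind: p => [|c m' p _ _ IH]; first by rewrite msubst00 !mcoeff0 if_same.
rewrite msubst0D msubst0Z msubst0X !mcoeffD !mcoeffZ IH.
have [->|ne] := eqVneq m' m; first by case: ifP; rewrite ?mcoeff0 ?mulr0 ?add0r.
by case: ifP; case: ifP; rewrite ?mcoeffX ?mcoeff0 ?(negbTE ne) ?mulr0 ?add0r.
Qed.

Lemma msubst0_id i p : msubst0 i (msubst0 i p) = msubst0 i p.
Proof. by apply/mpolyP => m; rewrite !mcoeff_msubst0; case: (m i == 0%N). Qed.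

Lemma msubst0_comm i j p : msubst0 i (msubst0 j p) = msubst0 j (msubst0 i p).
Proof.
by apply/mpolyP => m; rewrite !mcoeff_msubst0; case: (m i == 0%N); case: (m j == 0%N).
Qed.

Lemma msubst0_mderiv i j p : j != i ->
  msubst0 i p^`M(j) = (msubst0 i p)^`M(j).
Proof.
move=> ji; apply/mpolyP => m; rewrite mcoeff_mderiv !mcoeff_msubst0 mcoeff_mderiv.
by rewrite mnmDE mnm1E (negbTE ji) addn0; case: ifP; rewrite ?mul0rn.
Qed.

Lemma msubst0_eq0 i p : msubst0 i p = 0 -> exists q, p = 'X_i * q.
Proof.
move=> p0; exists (\sum_(m <- msupp p) p@_m *: 'X_[m - U_(i)]).
rewrite mulr_sumr {1}[p]mpolyE !big_seq; apply: eq_bigr => m mp.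
rewrite -scalerAr -mpolyXD addmC submK // lep1mP.
apply: contraTneq mp => mi0; rewrite mcoeff_msupp negbK.
by have := mcoeff_msubst0 i p m; rewrite mi0 eqxx p0 mcoeff0 => <-.
Qed.

Lemma mpolyX_neq0 i : ('X_i : MP) != 0.
Proof. by rewrite -msize_poly_eq0 msizeX mdeg1. Qed.

Lemma mpolyXn_neq0 i k : ('X_i : MP) ^+ k != 0.
Proof. exact/expf_neq0/mpolyX_neq0. Qed.

Lemma mpoly_multiplicity_X i p : p != 0 ->
  exists k q, msubst0 i q != 0 /\ p = 'X_i ^+ k * q.
Proof.
elim: {p}(msize p) {-2}p (leqnn (msize p)) => [|s IHs] p ps p0.
  by move: ps; rewrite leqn0 msize_poly_eq0 (negbTE p0).
have [/msubst0_eq0[q pXq]|pi0] := eqVneq (msubst0 i p) 0; last first.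
  by exists 0%N, p; rewrite mul1r.
have q0 : q != 0 by apply: contraNneq p0; rewrite pXq => ->; rewrite mulr0.
have qs : (msize q <= s)%N.
  by move: ps; rewrite pXq msizeM ?mpolyX_neq0 // msizeX mdeg1.
have [k [r [ri0 qXr]]] := IHs q qs q0.
by exists k.+1, r; rewrite pXq qXr exprS mulrA.
Qed.

End Restriction.

Arguments mpolyX_neq0 {n K} i.
Arguments mpolyXn_neq0 {n K} i k.

Section VectorField.
Context (n : nat) (K : idomainType).
Local Notation MP := {mpoly K[n]}.
Implicit Types (i j : 'I_n) (p q : MP).

Lemma mderivXU i j : ('X_i : MP)^`M(j) = (i == j)%:R.
Proof.
rewrite mderivX mnm1E; case: eqP => [->|_]; last by rewrite scale0r.
by rewrite scale1r -{1}[U_(j)%MM]add0m addmK mpolyX0.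
Qed.

Definition mder (F : 'I_n -> MP) p : MP := \sum_j F j * p^`M(j).

Implicit Types (F : 'I_n -> MP).

Lemma mderB F : {morph mder F : p q / p - q}.
Proof.
by move=> p q; rewrite /mder -sumrB; apply: eq_bigr => j _; rewrite mderivB mulrBr.
Qed.

Lemma mderCM F c p : mder F (c%:MP * p) = c%:MP * mder F p.
Proof.
by rewrite /mder mulr_sumr; apply: eq_bigr => j _; rewrite mderiv_mulC mulrCA.
Qed.

Lemma mderM F p q : mder F (p * q) = p * mder F q + q * mder F p.
Proof.
rewrite /mder !mulr_sumr -big_split; apply: eq_bigr => j _ /=.
by rewrite mderivM; ring.
Qed.

Lemma mderX F i : mder F 'X_i = F i.
Proof.
rewrite /mder (bigD1 i) //= mderivXU eqxx mulr1 big1 ?addr0 // => j ji.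
by rewrite mderivXU eq_sym (negbTE ji) mulr0.
Qed.

Lemma mderXnM F i (W : MP) k p : F i = 'X_i * W ->
  mder F ('X_i ^+ k * p) = 'X_i ^+ k * (mder F p + W * p *+ k).
Proof.
move=> FiW; elim: k => [|k IHk]; first by rewrite !expr0 !mul1r addr0.
by rewrite exprS -mulrA mderM IHk mderX FiW mulrS; ring.
Qed.

Lemma msubst0_mder F i p : msubst0 i (F i) = 0 ->
  msubst0 i (mder F p) = mder (msubst0 i \o F) (msubst0 i p).
Proof.
move=> Fi0; rewrite /mder rmorph_sum; apply: eq_bigr => j _ /=.
rewrite msubst0M; have [->|ji] := eqVneq j i; first by rewrite Fi0 !mul0r.
by rewrite msubst0_mderiv.
Qed.

Lemma msizeM_leq p q : (msize (p * q) <= (msize p + msize q).-1)%N.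
Proof.
have [->|p0] := eqVneq p 0; first by rewrite mul0r msize0.
have [->|q0] := eqVneq q 0; first by rewrite mulr0 msize0.
by rewrite msizeM.
Qed.

Lemma msize_mderiv_leq p j : (msize p^`M(j) <= (msize p).-1)%N.
Proof.
rewrite [X in (X <= _)%N]msizeE; apply/bigmax_leqP_seq => m mp _.
move: mp; rewrite mcoeff_msupp mcoeff_mderiv.
have [->|pm0] := eqVneq p@_(m + U_(j)) 0; first by rewrite mul0rn eqxx.
have := @msize_mdeg_lt _ _ p (m + U_(j))%MM.
by rewrite mcoeff_msupp pm0 mdegD mdeg1 addn1 => /(_ isT); case: (msize p).
Qed.

Lemma msizeD_leq p q k : (msize p <= k -> msize q <= k -> msize (p + q) <= k)%N.
Proof. by move=> pk qk; rewrite (leq_trans (msizeD_le p q)) // geq_max pk. Qed.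

Lemma msizeCM_leq c p : (msize (c%:MP * p) <= msize p)%N.
Proof. by rewrite mul_mpolyC msizeZ_le. Qed.

Lemma msizeXM_leq i p : (msize ('X_i * p) <= (msize p).+1)%N.
Proof. by rewrite (leq_trans (msizeM_leq _ _)) // msizeX mdeg1. Qed.

Lemma msize_mder_leq F (W : MP) p : W != 0 -> p != 0 ->
  (forall j, msize (F j) <= msize W)%N -> (msize (mder F p) + 2 <= msize W + msize p)%N.
Proof.
move=> W0 p0 FW; have p1 : (0 < msize p)%N by rewrite lt0n msize_poly_eq0.
have W1 : (0 < msize W)%N by rewrite lt0n msize_poly_eq0.
rewrite /mder; apply: (big_ind (fun f : MP => msize f + 2 <= msize W + msize p)%N).
- by rewrite msize0; lia.
- move=> f g fs gs; apply: leq_trans (leq_add (msizeD_le f g) (leqnn 2)) _.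
  by rewrite addn_maxl geq_max fs gs.
- move=> j _; have := msizeM_leq (F j) p^`M(j); have := msize_mderiv_leq p j; have := FW j; lia.
Qed.

Lemma mder_cross_Xn F i (W P Q : MP) (p q : nat) : F i = 'X_i * W ->
  'X_i ^+ q * Q * mder F ('X_i ^+ p * P) - 'X_i ^+ p * P * mder F ('X_i ^+ q * Q)
  = 'X_i ^+ (p + q) *
    (Q * mder F P - P * mder F Q - (q%:R - p%:R) *: (W * P * Q)).
Proof.
move=> FiW; rewrite !(mderXnM _ _ FiW) exprD scalerBl !scaler_nat.
move: ('X_i ^+ p) ('X_i ^+ q) (mder F P) (mder F Q) => Xp Xq LP LQ; ring.
Qed.

Lemma mder_cross_cofactor_eq0 F (W A B : MP) (k : K) :
    W != 0 -> (forall j, msize (F j) <= msize W)%N -> A != 0 -> B != 0 ->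
  B * mder F A - A * mder F B = k *: (W * A * B) -> k = 0.
Proof.
move=> W0 FW A0 B0 cross; apply/eqP; apply: contraT => k0; exfalso.
have := msizeD_le (B * mder F A) (- (A * mder F B)).
rewrite msizeN cross msizeZ // [msize (W * A * B)]msizeM ?mulf_neq0 //.
rewrite [msize (W * A)]msizeM //.
have := msizeM_leq B (mder F A); have := msize_mder_leq W0 A0 FW.
have := msizeM_leq A (mder F B); have := msize_mder_leq W0 B0 FW.
rewrite -!msize_poly_eq0 -!lt0n in W0 A0 B0; lia.
Qed.

End VectorField.

Section Descent.
Context (n : nat) (K : numFieldType).
Local Notation MP := {mpoly K[n]}.
Implicit Types (i j : 'I_n) (s : seq 'I_n) (p q : MP) (F : 'I_n -> MP).

Definition involves_only s p := forall j, j \notin s -> msubst0 j p = p.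

(* Forces the numerator and denominator of a first integral to have the same
   x_i-adic valuation. *)
Definition dominant_cofactor F i (W : MP) := [/\ F i = 'X_i * W,
  msubst0 i W != 0 & forall j, (msize (msubst0 i (F j)) <= msize (msubst0 i W))%N].

Fixpoint hyperplane_chain F s : Prop :=
  if s is i :: s' then
    (exists W, dominant_cofactor F i W) /\ hyperplane_chain (msubst0 i \o F) s'
  else True.

Lemma involves_only_nil p : involves_only [::] p -> exists c, p = c%:MP.
Proof.
move=> p0; exists p@_0; apply/mpolyP => m; rewrite mcoeffC.
have [->|m0] := eqVneq m 0%MM; first by rewrite mulr1.
have [j mj] : exists j, m j != 0%N.
  apply/existsP; apply: contraR m0 => /existsPn mj0.
  by apply/eqP/mnmP => j; rewrite mnm0E; apply/eqP/negbNE/mj0.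
by rewrite mulr0 -(p0 j) // mcoeff_msubst0 (negbTE mj).
Qed.

Lemma involves_only_XnM s i k p :
  involves_only (i :: s) ('X_i ^+ k * p) -> involves_only (i :: s) p.
Proof.
move=> Xp j js; have ji : i != j by apply: contraNneq js => ->; rewrite mem_head.
apply: (mulfI (mpolyXn_neq0 i k)).
by rewrite -[RHS](Xp j js) msubst0M msubst0Xn msubst0XU (negbTE ji).
Qed.

Lemma involves_only_msubst0 s i p :
  involves_only (i :: s) p -> involves_only s (msubst0 i p).
Proof.
move=> ip j js; have [->|ji] := eqVneq j i; first exact: msubst0_id.
by rewrite msubst0_comm ip // in_cons negb_or ji.
Qed.

Lemma involves_onlyBCM s p q c :
  involves_only s p -> involves_only s q -> involves_only s (p - c%:MP * q).
Proof. by move=> sp sq j js; rewrite msubst0B msubst0M msubst0C sp ?sq. Qed.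

Section DescentStep.
Variables (F : 'I_n -> MP) (i : 'I_n) (W : MP) (s : seq 'I_n).
Hypothesis dom : dominant_cofactor F i W.
Hypothesis restricted_integral_const : forall A B,
  involves_only s A -> involves_only s B -> B != 0 ->
  B * mder (msubst0 i \o F) A = A * mder (msubst0 i \o F) B ->
  exists mu, A = mu%:MP * B.

Lemma leading_parts_proportional (P Q P1 Q1 : MP) (p q : nat) :
    involves_only (i :: s) P -> involves_only (i :: s) Q ->
    P = 'X_i ^+ p * P1 -> Q = 'X_i ^+ q * Q1 ->
    msubst0 i P1 != 0 -> msubst0 i Q1 != 0 -> Q * mder F P = P * mder F Q ->
  p = q /\ exists mu, msubst0 i P1 = mu%:MP * msubst0 i Q1.
Proof.
case: dom => FiW Wi0 FW sP sQ eP eQ P10 Q10 PQ.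
have cross : Q1 * mder F P1 - P1 * mder F Q1 = (q%:R - p%:R) *: (W * P1 * Q1).
  apply/eqP; rewrite -subr_eq0; apply/eqP/(mulfI (mpolyXn_neq0 i (p + q))).
  by rewrite -mder_cross_Xn // -eP -eQ PQ subrr mulr0.
have Fi0 : msubst0 i (F i) = 0 by rewrite FiW msubst0M msubst0XU eqxx mul0r.
have := congr1 (msubst0 i) cross.
rewrite msubst0B !msubst0M msubst0Z !msubst0M !msubst0_mder // => cross0.
have qp0 := mder_cross_cofactor_eq0 Wi0 FW P10 Q10 cross0.
split; first by apply/eqP; rewrite -(eqr_nat K) eq_sym -subr_eq0 qp0.
apply: restricted_integral_const Q10 _.
- by apply/involves_only_msubst0/(@involves_only_XnM _ _ p); rewrite -eP.
- by apply/involves_only_msubst0/(@involves_only_XnM _ _ q); rewrite -eQ.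
- by apply/eqP; rewrite -subr_eq0 cross0 qp0 scale0r.
Qed.

Lemma descent (P Q : MP) : involves_only (i :: s) P -> involves_only (i :: s) Q ->
  Q != 0 -> Q * mder F P = P * mder F Q -> exists mu, P = mu%:MP * Q.
Proof.
move=> sP sQ Q0 PQ; have [->|P0] := eqVneq P 0; first by exists 0; rewrite mpolyC0 mul0r.
have [q [Q1 [Q10 eQ]]] := mpoly_multiplicity_X i Q0.
have [p [P1 [P10 eP]]] := mpoly_multiplicity_X i P0.
have [epq [mu emu]] := leading_parts_proportional sP sQ eP eQ P10 Q10 PQ.
exists mu; apply/eqP; rewrite -subr_eq0; apply/negPn/negP => D0.
(* P - mu Q is again a solution, but it is divisible by x_i^(q+1). *)
have sD := involves_onlyBCM mu sP sQ.
have DQ : Q * mder F (P - mu%:MP * Q) = (P - mu%:MP * Q) * mder F Q.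
  by rewrite mderB mderCM mulrBr PQ mulrBl [Q * _]mulrCA mulrA.
have [d [D1 [D10 eD]]] := mpoly_multiplicity_X i D0.
have [edq _] := leading_parts_proportional sD sQ eD eQ D10 Q10 DQ.
have [T eT] : exists T, P1 - mu%:MP * Q1 = 'X_i * T.
  by apply: msubst0_eq0; rewrite msubst0B msubst0M msubst0C emu subrr.
have eD1 : D1 = 'X_i * T.
  apply: (mulfI (mpolyXn_neq0 i q)); rewrite -eT -edq -eD eP eQ epq edq.
  by rewrite mulrBr mulrCA.
by move: D10; rewrite eD1 msubst0M msubst0XU eqxx mul0r eqxx.
Qed.

End DescentStep.

Theorem hyperplane_chain_first_integral F s : hyperplane_chain F s ->
  forall P Q : MP, involves_only s P -> involves_only s Q ->
    Q != 0 -> Q * mder F P = P * mder F Q ->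
  exists mu, P = mu%:MP * Q.
Proof.
elim: s F => [|i s IHs] F /= => [_ P Q|[[W dom] chain]].
  move=> /involves_only_nil[c ->] /involves_only_nil[d ->].
  rewrite mpolyC_eq0 => d0 _; exists (c / d).
  by rewrite -rmorphM /= divfK.
exact: (descent dom (IHs _ chain)).
Qed.

End Descent.

Section Xfield.
Variables (R : realType) (a b c : R).
Local Notation MP := {mpoly (Cx R)[3]}.
Local Notation ix := (@Ordinal 3 0 isT).
Local Notation iy := (@Ordinal 3 1 isT).
Local Notation iz := (@Ordinal 3 2 isT).

Definition Xvec (j : 'I_3) : MP :=
  [:: vx R * (1 - vy R + cst c * vx R - cst a * vx R * vz R);
      vy R * (-1 + vx R);
      vz R * (- cst b + cst a * vx R ^+ 2)]`_j.

Lemma Xfield_mder p : Xfield a b c p = mder Xvec p.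
Proof.
rewrite /mder (bigD1 ix) //= (bigD1 iy) //= (bigD1 iz) //= big1.
  by rewrite /Xfield /= -addrA; congr (_ + (_ + _)); rewrite [RHS]addr0.
by case=> [[|[|[|j]]] //].
Qed.

Lemma msubst0z_Xvec j : msubst0 iz (Xvec j) =
  [:: vx R * (1 - vy R + cst c * vx R); vy R * (-1 + vx R); 0]`_j.
Proof.
case: j => [[|[|[|//]]] ?] /=;
  rewrite !(msubst0M, msubst0D, msubst0N, msubst01, msubst0Xn) !msubst0XU ?msubst0C /=.
- by rewrite mulr0 subr0.
- by [].
- by rewrite mul0r.
Qed.

Lemma msubst0xz_Xvec j : msubst0 ix (msubst0 iz (Xvec j)) = [:: 0; - vy R; 0]`_j.
Proof.
rewrite msubst0z_Xvec; case: j => [[|[|[|//]]] ?] /=.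
- by rewrite msubst0M msubst0XU mul0r.
- by rewrite !(msubst0M, msubst0D, msubst0N, msubst01) !msubst0XU /= addr0 mulrN1.
- exact: msubst00.
Qed.

Lemma msubst0yxz_Xvec j : msubst0 iy (msubst0 ix (msubst0 iz (Xvec j))) = 0.
Proof.
rewrite msubst0xz_Xvec; case: j => [[|[|[|//]]] ?] /=; try exact: msubst00.
by rewrite msubst0N msubst0XU oppr0.
Qed.

Lemma msize_Wz : a != 0 -> (3 <= msize (- cst b + cst a * vx R ^+ 2))%N.
Proof.
move=> a0; have m0 : (U_(ix) *+ 2 == 0 :> 'X_{1..3})%MM = false.
  by rewrite -mdeg_eq0 mdegMn mdeg1.
have := @msize_mdeg_lt _ _ (- cst b + cst a * vx R ^+ 2) (U_(ix) *+ 2)%MM.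
rewrite mdegMn mdeg1; apply; rewrite mcoeff_msupp mcoeffD mcoeffN mcoeffC m0.
rewrite mulr0 oppr0 add0r mcoeffCM mpolyXn mcoeffX eqxx mulr1.
by rewrite eq_complex /= negb_and a0.
Qed.

Lemma msize_1y : (2 <= msize (1 - vy R))%N.
Proof.
have := @msize_mdeg_lt _ _ (1 - vy R) U_(iy)%MM.
rewrite mdeg1; apply; rewrite mcoeff_msupp mcoeffB mcoeff1 mnm1_eq0 mcoeffXU eqxx.
by rewrite sub0r oppr_eq0 oner_eq0.
Qed.

Lemma msizeXY_leq : (msize (vx R) <= 2 /\ msize (vy R) <= 2)%N.
Proof. by rewrite !msizeX !mdeg1. Qed.

Lemma dominant_cofactor_z :
  a != 0 -> dominant_cofactor Xvec iz (- cst b + cst a * vx R ^+ 2).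
Proof.
move=> a0; have [msize_x msize_y] := msizeXY_leq.
have Wz : msubst0 iz (- cst b + cst a * vx R ^+ 2) = - cst b + cst a * vx R ^+ 2.
  by rewrite msubst0D msubst0N msubst0M msubst0Xn !msubst0C msubst0XU.
split; rewrite ?Wz; first by [].
  by rewrite -msize_poly_eq0 -lt0n (leq_trans _ (msize_Wz a0)).
move=> j; apply: leq_trans (msize_Wz a0); rewrite msubst0z_Xvec.
case: j => [[|[|[|//]]] ?] /=; last by rewrite msize0.
  apply: leq_trans (msizeXM_leq _ _) _; apply: msizeD_leq.
    by apply: msizeD_leq; rewrite ?msizeN ?msize1.
  exact: leq_trans (msizeCM_leq _ _) msize_x.
apply: leq_trans (msizeXM_leq _ _) _.
by apply: msizeD_leq; rewrite ?msizeN ?msize1.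
Qed.

Lemma dominant_cofactor_x :
  dominant_cofactor (msubst0 iz \o Xvec) ix (1 - vy R + cst c * vx R).
Proof.
have [_ msize_y] := msizeXY_leq.
have Wx : msubst0 ix (1 - vy R + cst c * vx R) = 1 - vy R.
  by rewrite msubst0D msubst0B msubst01 msubst0M msubst0C !msubst0XU /= mulr0 addr0.
split; rewrite ?Wx; first by rewrite /= msubst0z_Xvec.
  by rewrite -msize_poly_eq0 -lt0n (leq_trans _ msize_1y).
move=> j; apply: leq_trans msize_1y; rewrite /= msubst0xz_Xvec.
by case: j => [[|[|[|//]]] ?] /=; rewrite ?msize0 ?msizeN.
Qed.

Lemma dominant_cofactor_y :
  dominant_cofactor (msubst0 ix \o (msubst0 iz \o Xvec)) iy (-1).
Proof.
split; rewrite ?msubst0N ?msubst01.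
- by rewrite /= msubst0xz_Xvec mulrN1.
- by rewrite oppr_eq0 oner_eq0.
- by move=> j; rewrite /= msubst0yxz_Xvec msize0.
Qed.

Lemma Xvec_chain : a != 0 -> hyperplane_chain Xvec [:: iz; ix; iy].
Proof.
move=> a0; split; first by exists (- cst b + cst a * vx R ^+ 2); apply: dominant_cofactor_z.
split; first by exists (1 - vy R + cst c * vx R); apply: dominant_cofactor_x.
by split; first by exists (-1); apply: dominant_cofactor_y.
Qed.

End Xfield.

Theorem theorem1p5 (R : realType) (a b c : R) :
  0 < a -> 0 < c -> 0 <= b ->
  ~ exists P Q : {mpoly (Cx R)[3]},
      rational_first_integral a b c P Q /\ rat_nonconstant P Q.
Proof.
move=> a_gt0 _ _ [P [Q [[Q0 PQ] nonconst]]]; apply: nonconst.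
rewrite !Xfield_mder in PQ.
have chain := Xvec_chain b c (lt0r_neq0 a_gt0).
by apply: (hyperplane_chain_first_integral chain) Q0 PQ => -[[|[|[|//]]] ?].
Qed.
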